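(* Let $m\ge 2$ and $n\ge 2$ be integers. Let $\mathrm{AGL}_{n-1}(\mathbb{Z}_m)\subset GL_n(\mathbb{Z}_m)$ be the group of matrices $g(A,v)=\begin{pmatrix}A&v\\0&1\end{pmatrix}$ with $A\in GL_{n-1}(\mathbb{Z}_m)$ and $v\in\mathbb{Z}_m^{n-1}$ a column vector. Fix a standard basis vector $e_i\in\mathbb{Z}_m^{n-1}$ and let $B=g(I,e_i)$. Then $\mathrm{AGL}_{n-1}(\mathbb{Z}_m)$ is generated by $B$ together with the matrices $g(E_{k,l}(1),0)$ for all $1\le k\neq l\le n-1$ and $g(D(\alpha,1),0)$ for all $\alpha\in\mathbb{Z}_m^\times$.
   Context: For $k\neq l$, $\Delta_{k,l}$ denotes the $(n-1)\times(n-1)$ matrix with $(k,l)$-entry $1$ and all other entries $0$ (and $\Delta_{k,k}$ the matrix with $(k,k)$-entry $1$, others $0$); $E_{k,l}(\alpha)=I+\alpha\Delta_{k,l}$; $D(\alpha,k)=I+(\alpha-1)\Delta_{k,k}$, the diagonal matrix with $(k,k)$-entry $\alpha$ and other diagonal entries $1$. Multiplication in $\mathrm{AGL}_{n-1}(\mathbb{Z}_m)$ is $g(A_1,v_1)g(A_2,v_2)=g(A_1A_2,A_1v_2+v_1)$. *)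

From HB Require Import structures.
From mathcomp Require Import all_boot all_order all_algebra all_fingroup.
Set Implicit Arguments. Unset Strict Implicit. Unset Printing Implicit Defensive.
Import GRing.Theory.
Local Open Scope ring_scope.

(* Matrices of size k (here k = n-1), entries indexed 0-based. *)
Section Affine.
Variable R : pzRingType.

(* entry (i,j) of A, as a function of natural indices (0 outside range) *)
Definition mx_at k l (A : 'M[R]_(k, l)) (i j : nat) : R :=
  match @insub nat (fun x => x < k)%N _ i, @insub nat (fun x => x < l)%N _ j with
  | Some i', Some j' => A i' j'
  | _, _ => 0
  end.

(* g(A,v) = [[A, v],[0, 1]] as a (k+1) x (k+1) matrix *)
Definition gmx k (A : 'M[R]_k) (v : 'cV[R]_k) : 'M[R]_k.+1 :=
  \matrix_(i < k.+1, j < k.+1)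
    if (i < k)%N then
      (if (j < k)%N then mx_at A i j
       else mx_at v i 0)
    else (if (j == k :> nat) then 1 else 0).

(* Delta_{k,l}: 0-based indices (paper's index k corresponds to k-1 here) *)
Definition Delta k (a b : nat) : 'M[R]_k :=
  \matrix_(i < k, j < k) (((i == a :> nat) && (j == b :> nat))%:R : R).

Definition Emx k (a b : nat) (alpha : R) : 'M[R]_k := 1%:M + alpha *: Delta k a b.
Definition Dmx k (alpha : R) (a : nat) : 'M[R]_k := 1%:M + (alpha - 1) *: Delta k a a.

Definition evec k (i : 'I_k) : 'cV[R]_k := delta_mx i 0.
End Affine.

Definition AGL (m n : nat) : {set {'GL_n['Z_m]}} :=
  [set x | [exists A : 'M['Z_m]_(n.-1), exists v : 'cV['Z_m]_(n.-1),
             (A \in unitmx) && (GLval x == gmx A v)]].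

Definition AGL_gens (m n : nat) (i : 'I_(n.-1)) : {set {'GL_n['Z_m]}} :=
  [set x | (GLval x == gmx 1%:M (@evec 'Z_m _ i))
        || [exists k : 'I_(n.-1), exists l : 'I_(n.-1),
              (k != l) && (GLval x == gmx (@Emx 'Z_m (n.-1) k l 1) 0)]
        || [exists alpha : 'Z_m, (alpha \is a GRing.unit)
              && (GLval x == gmx (@Dmx 'Z_m (n.-1) alpha 0%N) 0)]].

From mathcomp Require Import all_boot all_order all_algebra all_fingroup ring.
Set Implicit Arguments. Unset Strict Implicit. Unset Printing Implicit Defensive.
Import GRing.Theory.
Local Open Scope ring_scope.

(* Since g(A,v) = g(I,v) g(A,0), it suffices to reach every g(A,0) and every translation
   g(I,v).  Z_m is Euclidean for the norm sending x to its representative in [0, m), and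
   E_{k,l}(t) = E_{k,l}(1)^t, so Gaussian elimination with transvections runs column by
   column: Euclid's algorithm leaves a single nonzero entry in the upper part of the
   current column, invertibility makes it a unit, and after moving it to the first row it
   is normalised by some D(alpha,1); the rest of the column is then cleared.  For the
   translations, g(A,0) B g(A,0)^-1 = g(I, A e_i), permutation matrices carry e_i to every
   e_j, and translations compose additively. *)

Section AffineMatrix.
Variables (R : pzRingType) (k : nat).
Implicit Types (A B : 'M[R]_k) (v w : 'cV[R]_k).

Lemma mx_atE l p (A : 'M[R]_(l, p)) (i : 'I_l) (j : 'I_p) : mx_at A i j = A i j.
Proof. by rewrite /mx_at !valK. Qed.

Lemma gmx_lift A v (i j : 'I_k) :
  gmx A v (lift ord_max i) (lift ord_max j) = A i j.
Proof. by rewrite mxE (lift_max i) (lift_max j) !ltn_ord mx_atE. Qed.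

Lemma gmx_lift_max A v (i : 'I_k) : gmx A v (lift ord_max i) ord_max = v i 0.
Proof. by rewrite mxE (lift_max i) ltn_ord ltnn (mx_atE v i ord0). Qed.

Lemma gmx_max_lift A v (j : 'I_k) : gmx A v ord_max (lift ord_max j) = 0.
Proof. by rewrite mxE (lift_max j) ltnn (ltn_eqF (ltn_ord j)). Qed.

Lemma gmx_max A v : gmx A v ord_max ord_max = 1.
Proof. by rewrite mxE ltnn eqxx. Qed.

Definition gmxE := (gmx_lift, gmx_lift_max, gmx_max_lift, gmx_max).

Lemma gmxM A B v w : gmx A v *m gmx B w = gmx (A *m B) (A *m w + v).
Proof.
apply/matrixP => r c; rewrite mxE big_ord_recr /=.
have widen_lift (q : 'I_k) : widen_ord (leqnSn k) q = lift ord_max q.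
  by apply: val_inj; rewrite /= /bump leqNgt ltn_ord.
under eq_bigr do rewrite widen_lift.
case: (unliftP ord_max r) => [r'|] ->; case: (unliftP ord_max c) => [c'|] ->;
  rewrite !gmxE ?mulr0 ?addr0 ?mulr1 ?mul1r; try by rewrite big1 // => q _; rewrite gmxE mul0r.
- by rewrite mxE; apply: eq_bigr => q _; rewrite !gmxE.
- by rewrite !mxE; congr (_ + _); apply: eq_bigr => q _; rewrite !gmxE.
- by rewrite big1 ?add0r // => q _; rewrite gmxE mul0r.
Qed.

Lemma gmx1 : gmx (1%:M : 'M[R]_k) 0 = 1%:M.
Proof.
apply/matrixP => r c; rewrite [RHS]mxE.
case: (unliftP ord_max r) => [r'|] ->; case: (unliftP ord_max c) => [c'|] ->;
  rewrite !gmxE ?mxE ?eqxx //.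
- by rewrite (inj_eq lift_inj).
- by rewrite eq_sym (negbTE (neq_lift _ _)).
- by rewrite (negbTE (neq_lift _ _)).
Qed.

Lemma gmx0M A B : gmx (A *m B) 0 = gmx A 0 *m gmx B 0.
Proof. by rewrite gmxM mulmx0 addr0. Qed.

Lemma gmx_translation A v : gmx A v = gmx 1%:M v *m gmx A 0.
Proof. by rewrite gmxM mul1mx mulmx0 add0r. Qed.
End AffineMatrix.

Lemma unitmx_gmx (R : comUnitRingType) k (A : 'M[R]_k) v :
  A \in unitmx -> gmx A v \in unitmx.
Proof.
move=> hA; have /mulmx1_unit[] // : gmx A v *m gmx (invmx A) (- (invmx A *m v)) = 1%:M.
by rewrite gmxM mulmxV // mulmxN mulmxA mulmxV // mul1mx addNr gmx1.
Qed.

Section Elementary.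
Variables (R : comUnitRingType) (k : nat).
Implicit Types (A : 'M[R]_k) (a b r c : 'I_k) (s t u v : R).

Lemma Delta_delta_mx a b : Delta R k a b = delta_mx a b.
Proof. by apply/matrixP => i j; rewrite !mxE. Qed.

Lemma EmxE a b t : Emx k a b t = 1%:M + t *: delta_mx a b.
Proof. by rewrite /Emx Delta_delta_mx. Qed.

Lemma DmxE a u : Dmx k u a = 1%:M + (u - 1) *: delta_mx a a.
Proof. by rewrite /Dmx Delta_delta_mx. Qed.

Lemma delta_mx_mulE a b A r c : (delta_mx a b *m A) r c = (r == a)%:R * A b c.
Proof.
rewrite mxE (bigD1 b) //= big1 => [|q /negbTE nq]; last by rewrite mxE nq andbF mul0r.
by rewrite mxE eqxx andbT addr0.
Qed.

Lemma Emx_mulE a b t A r c :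
  (Emx k a b t *m A) r c = A r c + (if r == a then t * A b c else 0).
Proof.
rewrite EmxE mulmxDl mul1mx -scalemxAl mxE [in X in _ + X]mxE delta_mx_mulE.
by case: (r == a); rewrite ?mul1r ?mul0r ?mulr0.
Qed.

Lemma Dmx_mulE a u A r c :
  (Dmx k u a *m A) r c = if r == a then u * A r c else A r c.
Proof.
rewrite DmxE mulmxDl mul1mx -scalemxAl mxE [in X in _ + X]mxE delta_mx_mulE.
case: eqP => [->|_]; last by rewrite mul0r mulr0 addr0.
by rewrite mul1r mulrBl mul1r addrC subrK.
Qed.

Lemma EmxD a b s t : a != b -> Emx k a b s *m Emx k a b t = Emx k a b (s + t).
Proof.
move=> ab; rewrite !EmxE mulmxDl mul1mx mulmxDr mulmx1 -!scalemxAl -scalemxAr.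
by rewrite mul_delta_mx_0 1?eq_sym // !scaler0 addr0 scalerDl [s *: _ + _]addrC addrA.
Qed.

Lemma DmxM a u v : Dmx k u a *m Dmx k v a = Dmx k (u * v) a.
Proof.
rewrite !DmxE mulmxDl mul1mx mulmxDr mulmx1 -!scalemxAl -scalemxAr mul_delta_mx.
rewrite scalerA -addrA -!scalerDl; congr (_ + _ *: _).
by ring.
Qed.

Lemma unitmx_Emx a b t : a != b -> Emx k a b t \in unitmx.
Proof.
move=> ab; have /mulmx1_unit[] // : Emx k a b t *m Emx k a b (- t) = 1%:M.
by rewrite EmxD // subrr EmxE scale0r addr0.
Qed.

Lemma unitmx_Dmx a u : u \is a GRing.unit -> Dmx k u a \in unitmx.
Proof.
move=> hu; have /mulmx1_unit[] // : Dmx k u a *m Dmx k u^-1 a = 1%:M.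
by rewrite DmxM mulrV // DmxE subrr scale0r addr0.
Qed.

Lemma unitmx_Emx_mul a b t A : a != b -> (Emx k a b t *m A \in unitmx) = (A \in unitmx).
Proof. by move=> ab; rewrite unitmx_mul unitmx_Emx. Qed.

Lemma unitmx_Dmx_mul a u A : u \is a GRing.unit -> (Dmx k u a *m A \in unitmx) = (A \in unitmx).
Proof. by move=> hu; rewrite unitmx_mul unitmx_Dmx. Qed.
End Elementary.

Lemma invmx_col_id (R : comUnitRingType) k (A : 'M[R]_k) c :
  A \in unitmx -> (forall r, A r c = (r == c)%:R) -> forall s, invmx A s c = (s == c)%:R.
Proof.
move=> hA hc s; have := congr1 (fun M : 'M_k => M s c) (mulVmx hA).
rewrite !mxE (bigD1 c) //= hc eqxx mulr1 big1 ?addr0 // => q /negbTE nq.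
by rewrite hc nq mulr0.
Qed.

Section Elimination.
Variables (R : comUnitRingType) (nu : R -> nat).
Hypothesis nu_euclid : forall x y : R, y != 0 -> exists q, (nu (x - q * y) < nu y)%N.
Variables (k : nat) (P : 'M[R]_k.+1 -> Prop).
Hypothesis P1 : P 1%:M.
Hypothesis P_Emx : forall (a b : 'I_k.+1) t A, a != b -> P A -> P (Emx k.+1 a b t *m A).
Hypothesis P_Dmx : forall u A, u \is a GRing.unit -> P A -> P (Dmx k.+1 u 0 *m A).

Lemma P_of_Emx_mul (a b : 'I_k.+1) t A : a != b -> P (Emx k.+1 a b t *m A) -> P A.
Proof. by move=> ab /(P_Emx (- t) ab); rewrite mulmxA EmxD // addNr EmxE scale0r addr0 mul1mx. Qed.

Lemma P_of_Dmx_mul u A : u \is a GRing.unit -> P (Dmx k.+1 u 0 *m A) -> P A.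
Proof.
move=> hu; have hu' : u^-1 \is a GRing.unit by rewrite unitrV.
by move/(P_Dmx hu'); rewrite mulmxA (DmxM ord0) mulVr // (DmxE ord0) subrr scale0r addr0 mul1mx.
Qed.

Definition cols_id_from j (A : 'M[R]_k.+1) :=
  forall r c : 'I_k.+1, (j <= c)%N -> A r c = (r == c)%:R.

Lemma cols_id_from_Emx j (a b : 'I_k.+1) t A :
  (b < j)%N -> cols_id_from j A -> cols_id_from j (Emx k.+1 a b t *m A).
Proof.
move=> bj hA r c jc; rewrite Emx_mulE !hA //.
suff /negbTE-> : b != c by rewrite mulr0 if_same addr0.
by rewrite -(inj_eq val_inj) neq_ltn (leq_trans bj jc).
Qed.

Lemma cols_id_from_Dmx j u A :
  (0 < j)%N -> cols_id_from j A -> cols_id_from j (Dmx k.+1 u 0 *m A).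
Proof.
move=> j0 hA r c jc; rewrite (Dmx_mulE ord0) hA //; case: eqP => [->|//].
suff /negbTE-> : ord0 != c by rewrite mulr0.
by rewrite -(inj_eq val_inj) neq_ltn (leq_trans j0 jc).
Qed.

Definition P_cols_id j := forall A, A \in unitmx -> cols_id_from j A -> P A.

Lemma P_cols_id0 : P_cols_id 0.
Proof. by move=> A _ hA; suff -> : A = 1%:M by []; apply/matrixP => r c; rewrite hA // mxE. Qed.

Section Column.
Variable j : 'I_k.+1.
Hypothesis IH : P_cols_id j.

Definition pivot_at (r : 'I_k.+1) x (A : 'M[R]_k.+1) :=
  A r j = x /\ forall s : 'I_k.+1, (s <= j)%N -> s != r -> A s j = 0.

Definition P_pivot r x :=
  forall A, A \in unitmx -> cols_id_from j.+1 A -> pivot_at r x A -> P A.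

Lemma P_pivot_diag : P_pivot j 1.
Proof.
(* The entries below the pivot are cleared one at a time; column j then equals e_j. *)
move=> A; set S := fun B : 'M[R]_k.+1 => [set s : 'I_k.+1 | (j < s)%N && (B s j != 0)].
have [n] := ubnP #|S A|; elim: n A => // n IHn A hn hA hcols [hjj hz].
have [S0|[s]] := set_0Vmem (S A).
  apply: IH => // r c; rewrite leq_eqVlt => /orP[/eqP/val_inj<-|]; last exact: hcols.
  have [->//|rj] := eqVneq r j.
  case: (leqP r j) => [rj'|jr]; first exact: hz.
  have : r \notin S A by rewrite S0 inE.
  by rewrite inE jr negbK => /eqP.
rewrite inE => /andP[js nz].
have sj : s != j by rewrite -(inj_eq val_inj) gtn_eqF.
apply: (P_of_Emx_mul (t := - A s j) sj); apply: IHn.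
- suff -> : S (Emx k.+1 s j (- A s j) *m A) = S A :\ s.
    by move: hn; rewrite (cardsD1 s) inE js nz.
  apply/setP => l; rewrite !inE Emx_mulE.
  have [->|ls] := eqVneq l s; last by rewrite addr0.
  by rewrite hjj mulr1 subrr eqxx andbF.
- by rewrite unitmx_Emx_mul.
- exact: cols_id_from_Emx.
- split=> [|l hl lj]; rewrite Emx_mulE.
    by rewrite eq_sym (negbTE sj) addr0.
  have /negbTE-> : l != s by rewrite -(inj_eq val_inj) ltn_eqF // (leq_ltn_trans hl js).
  by rewrite addr0 hz.
Qed.

Lemma P_pivot_move (r r' : 'I_k.+1) x :
  (r <= j)%N -> (r' <= j)%N -> P_pivot r' x -> P_pivot r x.
Proof.
move=> hr hr' Hr' A hA hcols piv.
have [e|rr'] := eqVneq r r'; first by apply: Hr'; rewrite -?e.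
case: piv => hx hz.
have r'r : r' != r by rewrite eq_sym.
(* E(r',r,1) copies x into row r', then E(r,r',-1) clears row r. *)
apply: (P_of_Emx_mul (t := 1) r'r); apply: (P_of_Emx_mul (t := -1) rr'); apply: Hr'.
- by rewrite !unitmx_Emx_mul.
- by do 2![apply: cols_id_from_Emx => //].
have hr'0 : A r' j = 0 by apply: hz.
split=> [|s hs sr']; rewrite !Emx_mulE eqxx mul1r hr'0 hx add0r.
  by rewrite (negbTE r'r) addr0.
rewrite (negbTE sr'); have [->|sr] := eqVneq s r; first by rewrite mulN1r addr0 hx subrr.
by rewrite !addr0 hz.
Qed.

Lemma P_pivot_scale u : u \is a GRing.unit -> P_pivot ord0 1 -> P_pivot ord0 u.
Proof.
move=> hu H1 A hA hcols [hx hz]; have hu' : u^-1 \is a GRing.unit by rewrite unitrV.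
apply: (P_of_Dmx_mul hu'); apply: H1.
- by rewrite (unitmx_Dmx_mul ord0).
- exact: cols_id_from_Dmx.
split=> [|s hs s0]; rewrite (Dmx_mulE ord0) ?eqxx ?hx ?mulVr //.
by rewrite (negbTE s0) hz.
Qed.

Lemma P_pivot_unit (r : 'I_k.+1) u : (r <= j)%N -> u \is a GRing.unit -> P_pivot r u.
Proof.
move=> hr hu; apply: (P_pivot_move (r' := ord0) hr (leq0n j)); apply: (P_pivot_scale hu).
exact: (P_pivot_move (r := ord0) (leq0n j) (leqnn j) P_pivot_diag).
Qed.

Lemma pivot_at_unit (r : 'I_k.+1) x (A : 'M[R]_k.+1) :
  A \in unitmx -> cols_id_from j.+1 A -> (r <= j)%N -> pivot_at r x A -> x \is a GRing.unit.
Proof.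
move=> hA hcols hr [hx hz].
have invA_j (l : 'I_k.+1) : (j < l)%N -> invmx A j l = 0.
  move=> jl; rewrite (invmx_col_id hA) => [|q]; last exact: hcols.
  by rewrite -(inj_eq val_inj) ltn_eqF.
(* Row j of A^-1 vanishes beyond column j, so (A^-1 A) j j = A^-1 j r * x. *)
have := congr1 (fun M : 'M_k.+1 => M j j) (mulVmx hA); rewrite !mxE eqxx.
rewrite (bigD1 r) //= big1 ?addr0 => [hx1|l lr]; last first.
  by case: (leqP l j) => hl; [rewrite hz ?mulr0 | rewrite invA_j ?mul0r].
by apply/unitrP; exists (invmx A j r); rewrite -hx hx1 mulrC hx1.
Qed.

Lemma exists_pivot (A : 'M[R]_k.+1) :
  (forall r s : 'I_k.+1, (r <= j)%N -> (s <= j)%N -> r != s -> A r j = 0 \/ A s j = 0) ->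
  exists2 r : 'I_k.+1, (r <= j)%N & pivot_at r (A r j) A.
Proof.
move=> hA; case: (pickP [pred r : 'I_k.+1 | (r <= j)%N && (A r j != 0)]) => [r /andP[hr nz]|none].
  exists r => //; split=> // s hs sr.
  by have [] := hA s r hs hr sr => // /eqP; rewrite (negbTE nz).
exists ord0 => //; split=> // s hs _.
by have := none s; rewrite /= hs /= => /negbFE/eqP.
Qed.

Lemma P_cols_id_succ : P_cols_id j.+1.
Proof.
(* Euclid's algorithm on the upper part of column j, measured by the sum of the norms. *)
pose mu (A : 'M[R]_k.+1) := (\sum_(s < k.+1 | (s <= j)%N) nu (A s j))%N.
move=> A; have [n] := ubnP (mu A); elim: n A => // n IHn A hn hA hcols.
case: (boolP [exists r : 'I_k.+1, exists s : 'I_k.+1,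
  [&& (r <= j)%N, (s <= j)%N, r != s, A r j != 0 & A s j != 0]]); last first.
  move=> /existsPn none; have [r hr piv] : exists2 r : 'I_k.+1, (r <= j)%N & pivot_at r (A r j) A.
    apply: exists_pivot => r s hr hs rs; have /existsPn/(_ s) := none r.
    by rewrite hr hs rs /= negb_and !negbK => /orP[] /eqP; [left | right].
  exact: P_pivot_unit hr (pivot_at_unit hA hcols hr piv) A hA hcols piv.
case/existsP => r0 /existsP[s0 /and5P[hr0 hs0 rs0 nzr0 nzs0]].
have [r [s [hr hs rs nz le_rs]]] : exists r s : 'I_k.+1,
    [/\ (r <= j)%N, (s <= j)%N, r != s, A s j != 0 & (nu (A s j) <= nu (A r j))%N].
  case: (leqP (nu (A s0 j)) (nu (A r0 j))) => h; first by exists r0, s0.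
  by exists s0, r0; rewrite eq_sym (ltnW h).
have [q hq] := nu_euclid (A r j) nz.
apply: (P_of_Emx_mul (t := - q) rs); apply: IHn; last exact: cols_id_from_Emx.
- rewrite -ltnS (leq_trans _ hn) // ltnS /mu (bigD1 r hr) [X in (_ < X)%N](bigD1 r hr) /=.
  under eq_bigr => l /andP[_ /negbTE lr] do rewrite Emx_mulE lr addr0.
  by rewrite ltn_add2r Emx_mulE eqxx mulNr (leq_trans hq le_rs).
- by rewrite unitmx_Emx_mul.
Qed.

End Column.

Lemma P_cols_id_le j : (j <= k.+1)%N -> P_cols_id j.
Proof.
elim: j => [|j IHj] hj; first exact: P_cols_id0.
exact: (@P_cols_id_succ (Ordinal hj) (IHj (ltnW hj))).
Qed.

Theorem unitmx_elementary_ind A : A \in unitmx -> P A.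
Proof. by move=> hA; apply: (P_cols_id_le (leqnn _)) => // r c; rewrite leqNgt ltn_ord. Qed.
End Elimination.

Lemma Zp_euclid p (x y : 'Z_p.+2) :
  y != 0 -> exists q : 'Z_p.+2, (nat_of_ord (x - q * y)%R < y)%N.
Proof.
move=> y0; exists (x %/ y)%N%:R.
have -> : x - (x %/ y)%N%:R * y = (x %% y)%N%:R.
  by rewrite -{1}[x]natr_Zp {1}(divn_eq x y) natrD natrM natr_Zp addrAC subrr add0r.
rewrite val_Zp_nat // modn_small; last exact: leq_ltn_trans (leq_mod _ _) (ltn_ord x).
by rewrite ltn_pmod // lt0n.
Qed.

Lemma AGL_group_set m n : group_set (AGL m n).
Proof.
apply/group_setP; split=> [|x y].
  rewrite inE; apply/existsP; exists 1%:M; apply/existsP; exists 0.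
  by rewrite unitmx1 GL_1E gmx1 /=; apply/eqP.
rewrite !inE => /existsP[A /existsP[v /andP[hA /eqP hx]]].
move=> /existsP[B /existsP[w /andP[hB /eqP hy]]].
apply/existsP; exists (A *m B); apply/existsP; exists (A *m w + v).
by rewrite unitmx_mul hA hB GL_MxE hx hy gmxM eqxx.
Qed.

Canonical AGL_group m n := Group (AGL_group_set m n).

Lemma AGL_gens_subset m n (i : 'I_n.+1) : @AGL_gens m n.+2 i \subset AGL m n.+2.
Proof.
apply/subsetP => x; rewrite !inE.
case/orP => [/orP[/eqP hx | /existsP[a /existsP[b /andP[ab /eqP hx]]]]
           | /existsP[u /andP[hu /eqP hx]]]; apply/existsP.
- by exists 1%:M; apply/existsP; exists (evec 'Z_m i); rewrite unitmx1 hx eqxx.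
- by exists (Emx n.+1 a b 1); apply/existsP; exists 0; rewrite unitmx_Emx // hx eqxx.
- by exists (Dmx n.+1 u 0); apply/existsP; exists 0; rewrite (unitmx_Dmx ord0) // hx eqxx.
Qed.

Section Generation.
Variables (m n : nat) (i : 'I_n.+1).
Local Notation R := 'Z_m.+2.
Local Notation H := <<@AGL_gens m.+2 n.+2 i>>%g.

Definition in_gens_mx (M : 'M[R]_n.+2) := exists2 y : {'GL_n.+2[R]}, y \in H & GLval y = M.

Lemma in_gens_mx_mul M N : in_gens_mx M -> in_gens_mx N -> in_gens_mx (M *m N).
Proof. by move=> [y hy <-] [z hz <-]; exists (y * z)%g; [exact: groupM | rewrite GL_MxE]. Qed.

Lemma in_gens_mx1 : in_gens_mx 1%:M.
Proof. by exists 1%g; [exact: group1 | rewrite GL_1E]. Qed.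

Lemma in_gens_mx_gen M (hM : M \in unitmx) :
  (Sub M hM : {'GL_n.+2[R]}) \in @AGL_gens m.+2 n.+2 i -> in_gens_mx M.
Proof. by move=> hy; exists (Sub M hM) => //; exact: mem_gen. Qed.

Lemma in_gens_Emx (a b : 'I_n.+1) t : a != b -> in_gens_mx (gmx (Emx n.+1 a b t) 0).
Proof.
move=> ab; rewrite -[t]natr_Zp; elim: (val t) => [|l IHl].
  by rewrite EmxE scale0r addr0 gmx1; exact: in_gens_mx1.
rewrite mulrS -EmxD // gmx0M; apply: in_gens_mx_mul IHl.
apply: (in_gens_mx_gen (hM := unitmx_gmx 0 (unitmx_Emx (1 : R) ab))).
rewrite inE; apply/orP; left; apply/orP; right.
by apply/existsP; exists a; apply/existsP; exists b; rewrite ab SubK eqxx.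
Qed.

Lemma in_gens_Dmx u : u \is a GRing.unit -> in_gens_mx (gmx (Dmx n.+1 u 0) 0).
Proof.
move=> hu; apply: (in_gens_mx_gen (hM := unitmx_gmx 0 (unitmx_Dmx ord0 hu))).
by rewrite inE; apply/orP; right; apply/existsP; exists u; rewrite hu SubK eqxx.
Qed.

Lemma in_gens_linear A : A \in unitmx -> in_gens_mx (gmx A 0).
Proof.
apply: (@unitmx_elementary_ind _ _ (@Zp_euclid m) _ (fun A => in_gens_mx (gmx A 0))).
- by rewrite gmx1; exact: in_gens_mx1.
- by move=> a b t B ab hB; rewrite gmx0M; apply: in_gens_mx_mul (in_gens_Emx t ab) hB.
- by move=> u B hu hB; rewrite gmx0M; apply: in_gens_mx_mul (in_gens_Dmx hu) hB.
Qed.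

Definition in_gens_translation (w : 'cV[R]_n.+1) := in_gens_mx (gmx 1%:M w).

Lemma in_gens_translation0 : in_gens_translation 0.
Proof. by rewrite /in_gens_translation gmx1; exact: in_gens_mx1. Qed.

Lemma in_gens_translationD v w :
  in_gens_translation v -> in_gens_translation w -> in_gens_translation (v + w).
Proof. by move=> hv hw; have := in_gens_mx_mul hv hw; rewrite gmxM mulmx1 mul1mx addrC. Qed.

Lemma in_gens_translationMn w l : in_gens_translation w -> in_gens_translation (w *+ l).
Proof.
move=> hw; elim: l => [|l IHl]; first by rewrite mulr0n; exact: in_gens_translation0.
by rewrite mulrS; apply: in_gens_translationD.
Qed.

Lemma in_gens_translation_conj A w : A \in unitmx ->
  in_gens_translation w -> in_gens_translation (A *m w).
Proof.
move=> hA hw; have hA' : invmx A \in unitmx by rewrite unitmx_inv.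
have := in_gens_mx_mul (in_gens_mx_mul (in_gens_linear hA) hw) (in_gens_linear hA').
by rewrite !gmxM mulmx1 mulmxV // mulmx0 !addr0 add0r.
Qed.

Lemma tperm_mx_delta (j : 'I_n.+1) :
  tperm_mx i j *m delta_mx i ord0 = delta_mx j ord0 :> 'cV[R]_n.+1.
Proof.
apply/matrixP => r c; rewrite (ord1 c) -colE !mxE /=.
by rewrite -{2}[i](tpermR i j) (inj_eq perm_inj) eqxx andbT.
Qed.

Lemma in_gens_translation_all w : in_gens_translation w.
Proof.
have in_gens_ei : in_gens_translation (delta_mx i 0).
  apply: (in_gens_mx_gen (hM := unitmx_gmx _ (unitmx1 _ _))).
  by rewrite inE; apply/orP; left; apply/orP; left; rewrite SubK.
rewrite (matrix_sum_delta w).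
apply: (big_ind _ in_gens_translation0 in_gens_translationD) => j _.
apply: (big_ind _ in_gens_translation0 in_gens_translationD) => c _.
rewrite (ord1 c) -[w j 0]natr_Zp scaler_nat; apply: in_gens_translationMn.
rewrite -tperm_mx_delta; apply: in_gens_translation_conj; [exact: unitmx_perm | exact: in_gens_ei].
Qed.

Lemma AGL_subset_gen : AGL m.+2 n.+2 \subset H.
Proof.
apply/subsetP => x; rewrite inE => /existsP[A /existsP[v /andP[hA /eqP hx]]].
have [y hy hyx] : in_gens_mx (gmx A v).
  rewrite gmx_translation.
  exact: in_gens_mx_mul (in_gens_translation_all v) (in_gens_linear hA).
by rewrite (_ : x = y) //; apply: val_inj; rewrite /= hx hyx.
Qed.
End Generation.

Theorem lemma3p6 (m n : nat) (hm : (2 <= m)%N) (hn : (2 <= n)%N) (i : 'I_(n.-1)) :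
  <<@AGL_gens m n i>>%g = AGL m n.
Proof.
case: m hm => [|[|m]] // _; case: n hn i => [|[|n]] // _ i.
apply/eqP; rewrite eqEsubset AGL_subset_gen andbT.
by rewrite gen_subG AGL_gens_subset.
Qed.
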